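(* Let $a<0$, $b>0$, $c\in(0,1)$, $d>0$, and set $\pi_0=bd(1-c)^a/(1+bd(1-c)^a)$. (i) If $Z\sim\mathrm{NB}(\pi_0,1/d)$ and $W_1,W_2,\dots$ are i.i.d. $\mathrm{NB}(c,-a)$ independent of $Z$, then $\sum_{i=1}^Z W_i\sim\mathrm{TDL}(a,b,c,d)$. (ii) If $Z\sim\mathrm{NB}(\pi_0,1/d)$ and, conditionally on $Z$, $X\sim\mathrm{NB}(c,-aZ)$ (point mass at $0$ when $Z=0$), then $X\sim\mathrm{TDL}(a,b,c,d)$. (iii) Let $G_1$ be Gamma with Laplace transform $(1+bd(1-c)^a t)^{-1/d}$; conditionally on $G_1$ let $N$ be Poisson with mean $G_1$; conditionally on $(G_1,N)$ let $G_2$ be Gamma with scale $c/(1-c)$ and shape $-aN$ (Laplace transform $(1+ct/(1-c))^{aN}$, point mass at $0$ if $N=0$); conditionally on $(G_1,N,G_2)$ let $X$ be Poisson with mean $G_2$. Then $X\sim\mathrm{TDL}(a,b,c,d)$.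
   Context: $\mathrm{NB}(\pi,\delta)$, $\pi\in(0,1)$, $\delta>0$: law on $\mathbb{N}$ with pgf $((1-\pi)/(1-\pi s))^\delta$. $\mathrm{TDL}(a,b,c,d)$: law on $\mathbb{N}$ with pgf $\big(1+\operatorname{sgn}(a)\,b\,d\,((1-cs)^a-(1-c)^a)\big)^{-1/d}$, $s\in[0,1]$, where $\operatorname{sgn}$ is the sign function (so $\operatorname{sgn}(a)=-1$ here). An empty sum equals $0$. *)

From Stdlib Require Import Reals Arith Factorial.
Open Scope R_scope.

Fixpoint rising (x : R) (k : nat) : R :=
  match k with
  | O => 1
  | S k' => rising x k' * (x + INR k')
  end.

(* pmf of NB(p, delta): pgf ((1-p)/(1-p s))^delta.
   For delta = 0 this is the point mass at 0. *)
Definition nb_pmf (p delta : R) (k : nat) : R :=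
  rising delta k / INR (fact k) * Rpower (1 - p) delta * p ^ k.

Definition poisson_pmf (m : R) (k : nat) : R :=
  exp (- m) * m ^ k / INR (fact k).

Definition dirac0 (k : nat) : R := if Nat.eqb k 0 then 1 else 0.

Definition conv (p q : nat -> R) (k : nat) : R :=
  sum_f_R0 (fun j => p j * q (k - j)%nat) k.

(* n-fold convolution power: law of W_1 + ... + W_n, W_i iid with pmf p *)
Fixpoint convpow (p : nat -> R) (n : nat) : nat -> R :=
  match n with
  | O => dirac0
  | S n' => conv p (convpow p n')
  end.

Definition sgn (x : R) : R :=
  if Rlt_dec x 0 then -1 else if Rlt_dec 0 x then 1 else 0.

Definition tdl_pgf (a b c d s : R) : R :=
  Rpower (1 + sgn a * b * d * (Rpower (1 - c * s) a - Rpower (1 - c) a)) (- (1 / d)).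

Definition pi0 (a b c d : R) : R :=
  b * d * Rpower (1 - c) a / (1 + b * d * Rpower (1 - c) a).

Definition has_pgf (p : nat -> R) (G : R -> R) : Prop :=
  forall s, 0 <= s <= 1 -> infinite_sum (fun k => p k * s ^ k) (G s).

Definition improper_int0 (f : R -> R) (l : R) : Prop :=
  forall eps, eps > 0 ->
    exists delta, delta > 0 /\ exists M, M > 0 /\
      forall u v, 0 < u < delta -> M < v ->
        exists pr : Riemann_integrable f u v, Rabs (RiemannInt pr - l) < eps.

Definition density_with_laplace (f : R -> R) (L : R -> R) : Prop :=
  (forall x, 0 < x -> 0 <= f x) /\
  (forall t, 0 <= t -> improper_int0 (fun x => exp (- (t * x)) * f x) (L t)).

(* Each representation is a compound law: a count N with pgf P, and given N = n a law with pgf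
   W^n, where W(s) = ((1-c)/(1-cs))^(-a) is the NB(c,-a) pgf; by Tonelli for nonnegative double
   series the compound law has pgf P(W(s)).  In (i) and (ii) W^n is the pgf of the n-fold
   convolution of NB(c,-a) and of NB(c,-an), and P(y) = (1 + B(1-y))^(-1/d), B = bd(1-c)^a, is
   the NB(pi0,1/d) pgf.  In (iii) a Poisson mixture with mixing density f has pgf L_f(1-s), where
   L_f is the Laplace transform of f; this gives the same P and, for the Gamma layer, W^n again.
   Finally P(W(s)) is the TDL pgf because B W(s) = bd(1-cs)^a. *)

From Stdlib Require Import Reals Lra Lia Factorial.
From Coquelicot Require Import Coquelicot.
Open Scope R_scope.

(** * Nonnegative series and probability generating functions *)

Lemma infinite_sum_ext (a b : nat -> R) (l : R) :
  (forall n, a n = b n) -> infinite_sum a l -> infinite_sum b l.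
Proof.
  intros E H; apply is_series_Reals; apply is_series_Reals in H.
  exact (is_series_ext a b l E H).
Qed.

Lemma infinite_sum_scal_l (a : nat -> R) (k l : R) :
  infinite_sum a l -> infinite_sum (fun n => k * a n) (k * l).
Proof. intros H; apply is_series_Reals; exact (is_series_scal_l k a l (proj2 (is_series_Reals a l) H)). Qed.

Lemma infinite_sum_term_le (a : nat -> R) (l : R) (N : nat) :
  (forall n, 0 <= a n) -> infinite_sum a l -> a N <= l.
Proof.
  intros Ha H. apply Rle_trans with (sum_f_R0 a N); [|exact (sum_incr a N l H Ha)].
  destruct N as [|N]; simpl; [lra|]. pose proof (cond_pos_sum a N Ha); lra.
Qed.

Lemma Un_cv_le_const (u : nat -> R) (l M : R) :
  Un_cv u l -> (forall n, u n <= M) -> l <= M.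
Proof.
  intros Hu HM. apply (Rle_cv_lim (Vn := fun _ => M) HM Hu).
  intros eps Heps; exists O; intros n _. unfold R_dist; rewrite Rminus_diag, Rabs_R0; lra.
Qed.

Lemma infinite_sum_bounded_nonneg (a : nat -> R) (M : R) :
  (forall n, 0 <= a n) -> (forall N, sum_f_R0 a N <= M) ->
  exists l, infinite_sum a l /\ l <= M.
Proof.
  intros Ha HM. destruct (growing_cv (sum_f_R0 a)) as [l Hl].
  - intros n; simpl; specialize (Ha (S n)); lra.
  - exists M; intros x [N ->]; apply HM.
  - exists l; split; [exact Hl | exact (Un_cv_le_const _ _ _ Hl HM)].
Qed.

Lemma infinite_sum_sum_f_R0 (b : nat -> nat -> R) (col : nat -> R) (K : nat) :
  (forall k, infinite_sum (fun n => b n k) (col k)) ->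
  infinite_sum (fun n => sum_f_R0 (b n) K) (sum_f_R0 col K).
Proof.
  intros H; induction K as [|K IH]; simpl; [apply H|].
  intros eps Heps. destruct (CV_plus _ _ _ _ IH (H (S K)) eps Heps) as [N HN].
  exists N; intros n Hn. rewrite plus_sum. exact (HN n Hn).
Qed.

Lemma sum_col_le_sum_row (b : nat -> nat -> R) (row col : nat -> R) (T : R) :
  (forall n k, 0 <= b n k) ->
  (forall n, infinite_sum (b n) (row n)) ->
  (forall k, infinite_sum (fun n => b n k) (col k)) ->
  infinite_sum row T -> forall K, sum_f_R0 col K <= T.
Proof.
  intros Hb Hrow Hcol HT K. apply (Un_cv_le_const _ _ _ (infinite_sum_sum_f_R0 b col K Hcol)).
  intros N. apply Rle_trans with (sum_f_R0 row N).
  - apply sum_Rle; intros n _. exact (sum_incr _ K _ (Hrow n) (Hb n)).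
  - apply sum_incr; [exact HT|]. intros n.
    apply Rle_trans with (b n O); [apply Hb | exact (infinite_sum_term_le _ _ O (Hb n) (Hrow n))].
Qed.

Lemma infinite_sum_swap_nonneg (b : nat -> nat -> R) (row col : nat -> R) (T : R) :
  (forall n k, 0 <= b n k) ->
  (forall n, infinite_sum (b n) (row n)) ->
  (forall k, infinite_sum (fun n => b n k) (col k)) ->
  infinite_sum row T -> infinite_sum col T.
Proof.
  intros Hb Hrow Hcol HT. destruct (infinite_sum_bounded_nonneg col T) as [S [HS HST]].
  - intros k. apply Rle_trans with (b O k); [apply Hb|].
    exact (infinite_sum_term_le (fun n => b n k) _ O (fun n => Hb n k) (Hcol k)).
  - exact (sum_col_le_sum_row b row col T Hb Hrow Hcol HT).
  - assert (HTS : T <= S).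
    { apply (Un_cv_le_const (sum_f_R0 row) T S HT).
      exact (sum_col_le_sum_row (fun k n => b n k) col row S (fun k n => Hb n k) Hcol Hrow HS). }
    replace T with S by lra. exact HS.
Qed.

Lemma has_pgf_dirac0 : has_pgf dirac0 (fun _ => 1).
Proof.
  intros s _ eps Heps. exists O; intros n _.
  replace (sum_f_R0 (fun k => dirac0 k * s ^ k) n) with 1; [rewrite R_dist_eq; lra|].
  induction n as [|n IH]; simpl; [unfold dirac0; simpl; ring|].
  rewrite <- IH; unfold dirac0; simpl; ring.
Qed.

Lemma has_pgf_conv (p q : nat -> R) (P Q : R -> R) :
  (forall k, 0 <= p k) -> (forall k, 0 <= q k) -> has_pgf p P -> has_pgf q Q ->
  has_pgf (conv p q) (fun s => P s * Q s).
Proof.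
  intros Hp Hq HP HQ s Hs. apply is_series_Reals.
  eapply is_series_ext;
    [|apply (is_series_mult_pos (fun k => p k * s ^ k) (fun k => q k * s ^ k));
      try (apply is_series_Reals; auto); intros k;
      apply Rmult_le_pos; auto; apply pow_le; lra].
  intros k. unfold conv. rewrite Rmult_comm, scal_sum. apply sum_eq. intros j Hj.
  replace (s ^ k) with (s ^ j * s ^ (k - j)) by (rewrite <- pow_add; f_equal; lia). ring.
Qed.

Lemma dirac0_nonneg (k : nat) : 0 <= dirac0 k.
Proof. unfold dirac0; destruct (Nat.eqb k 0); lra. Qed.

Lemma convpow_nonneg (p : nat -> R) (n k : nat) :
  (forall k, 0 <= p k) -> 0 <= convpow p n k.
Proof.
  intros Hp. revert k; induction n as [|n IH]; intros k; simpl.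
  - apply dirac0_nonneg.
  - apply cond_pos_sum; intros j. apply Rmult_le_pos; auto.
Qed.

Lemma has_pgf_convpow (p : nat -> R) (P : R -> R) (n : nat) :
  (forall k, 0 <= p k) -> has_pgf p P -> has_pgf (convpow p n) (fun s => P s ^ n).
Proof.
  intros Hp HP. induction n as [|n IH]; [exact has_pgf_dirac0|].
  apply has_pgf_conv; auto. intros k; apply convpow_nonneg, Hp.
Qed.

Lemma compound_pgf (pN : nat -> R) (PN : R -> R) (q : nat -> nat -> R) (Y : R -> R) :
  (forall n, 0 <= pN n) -> has_pgf pN PN ->
  (forall n k, 0 <= q n k) -> (forall n, has_pgf (q n) (fun s => Y s ^ n)) ->
  (forall s, 0 <= s <= 1 -> 0 <= Y s <= 1) ->
  exists pX, (forall k, infinite_sum (fun n => pN n * q n k) (pX k)) /\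
             has_pgf pX (fun s => PN (Y s)).
Proof.
  intros HpN HPN Hq HY HY01.
  assert (Hq1 : forall n k, q n k <= 1).
  { intros n k. assert (H := HY n 1 ltac:(lra)). cbv beta in H.
    apply (infinite_sum_term_le _ _ k) in H;
      [|intros j; rewrite pow1, Rmult_1_r; apply Hq].
    cbv beta in H; rewrite pow1, Rmult_1_r in H. eapply Rle_trans; [exact H|].
    apply Rle_trans with (1 ^ n); [apply pow_incr, HY01; lra | rewrite pow1; lra]. }
  assert (Hcol : forall k, infinite_sum (fun n => pN n * q n k) (Series (fun n => pN n * q n k))).
  { intros k. apply is_series_Reals, Series_correct.
    apply (@ex_series_le R_AbsRing R_CompleteNormedModule _ pN).
    - intros n. rewrite Rabs_pos_eq by (apply Rmult_le_pos; auto).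
      rewrite <- (Rmult_1_r (pN n)) at 2. apply Rmult_le_compat_l; auto.
    - exists (PN 1). apply is_series_Reals.
      apply (infinite_sum_ext (fun n => pN n * 1 ^ n)); [intros n; rewrite pow1; ring | apply HPN; lra]. }
  exists (fun k => Series (fun n => pN n * q n k)). split; [exact Hcol|].
  intros s Hs.
  apply (infinite_sum_swap_nonneg (fun n k => pN n * q n k * s ^ k) (fun n => pN n * Y s ^ n)).
  - intros n k. apply Rmult_le_pos; [apply Rmult_le_pos; auto | apply pow_le; lra].
  - intros n. eapply infinite_sum_ext; [|exact (infinite_sum_scal_l _ (pN n) _ (HY n s Hs))].
    intros k; cbv beta; ring.
  - intros k. eapply infinite_sum_ext;
      [|rewrite Rmult_comm; exact (infinite_sum_scal_l _ (s ^ k) _ (Hcol k))].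
    intros n; cbv beta; ring.
  - apply HPN, HY01, Hs.
Qed.

(** * Newton's binomial series and the negative binomial law *)

Definition nb_coef (x : R) (k : nat) : R := rising x k / INR (fact k).

Lemma rising_pos (x : R) (k : nat) : 0 < x -> 0 < rising x k.
Proof.
  intros Hx; induction k as [|k IH]; simpl; [lra|].
  apply Rmult_lt_0_compat; [exact IH | pose proof (pos_INR k); lra].
Qed.

Lemma nb_coef_pos (x : R) (k : nat) : 0 < x -> 0 < nb_coef x k.
Proof.
  intros Hx; apply Rdiv_lt_0_compat; [now apply rising_pos | apply lt_0_INR, lt_O_fact].
Qed.

Lemma nb_coef_S (x : R) (k : nat) : INR (S k) * nb_coef x (S k) = (x + INR k) * nb_coef x k.
Proof.
  unfold nb_coef; simpl rising; rewrite fact_simpl, mult_INR.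
  pose proof (lt_0_INR _ (lt_O_fact k)); pose proof (lt_0_INR (S k) (Nat.lt_0_succ k)).
  field; lra.
Qed.

Lemma is_lim_seq_inv_S : is_lim_seq (fun n => / INR (S n)) 0.
Proof.
  apply (is_lim_seq_incr_1 (fun n => / INR n)).
  replace (Finite 0) with (Rbar_inv p_infty) by reflexivity.
  apply is_lim_seq_inv; [exact is_lim_seq_INR | discriminate].
Qed.

Lemma CV_radius_nb_coef (x : R) : 0 < x -> CV_radius (nb_coef x) = 1.
Proof.
  intros Hx. rewrite <- Rinv_1.
  apply CV_radius_finite_DAlembert; [intros n; pose proof (nb_coef_pos x n Hx); lra | lra|].
  apply (is_lim_seq_ext (fun n => 1 + (x - 1) * / INR (S n))).
  - intros n. pose proof (nb_coef_pos x n Hx). pose proof (lt_0_INR (S n) (Nat.lt_0_succ n)).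
    assert (E : nb_coef x (S n) / nb_coef x n = (x + INR n) / INR (S n)).
    { apply Rmult_eq_reg_l with (INR (S n) * nb_coef x n); [|nra].
      field_simplify; [rewrite nb_coef_S; ring | lra | lra]. }
    rewrite E, Rabs_pos_eq; [rewrite S_INR in *; field; lra|].
    apply Rdiv_le_0_compat; [pose proof (pos_INR n) |]; lra.
  - replace (Finite 1) with (Finite (1 + (x - 1) * 0)) by (f_equal; ring).
    apply is_lim_seq_plus'; [apply is_lim_seq_const|].
    exact (is_lim_seq_scal_l _ (x - 1) 0 is_lim_seq_inv_S).
Qed.

Lemma PSeries_derive_nb_coef (x y : R) : 0 < x -> -1 < y < 1 ->
  (1 - y) * PSeries (PS_derive (nb_coef x)) y = x * PSeries (nb_coef x) y.
Proof.
  intros Hx Hy.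
  assert (Hr : Rbar_lt (Rabs y) (CV_radius (nb_coef x))).
  { rewrite CV_radius_nb_coef by exact Hx. simpl. unfold Rabs; destruct Rcase_abs; lra. }
  set (D := PSeries (PS_derive (nb_coef x)) y).
  assert (HD : is_pseries (PS_derive (nb_coef x)) y D) by apply PSeries_correct, ex_pseries_derive, Hr.
  assert (Hg := PSeries_correct _ _ (CV_radius_inside _ _ Hr)).
  (* the coefficient recurrence (k+1) c_(k+1) = (x + k) c_k, read as an equation between series *)
  assert (HD' : is_pseries (PS_derive (nb_coef x)) y (x * PSeries (nb_coef x) y + y * D)).
  { refine (is_pseries_ext _ _ _ _ _
      (is_pseries_plus _ _ _ _ _ (is_pseries_scal x _ _ _ (Rmult_comm y x) Hg)
                                 (is_pseries_incr_1 _ _ _ HD))).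
    intros k. unfold PS_plus, PS_scal, PS_incr_1, PS_derive. rewrite nb_coef_S.
    change (plus ?u ?v) with (u + v); change (scal ?u ?v) with (u * v).
    match goal with |- ?u = ?v => change (@eq R u v) end.
    destruct k as [|k]; change (mult ?u ?v) with (u * v); [change zero with 0; simpl; ring|].
    rewrite (S_INR k). ring. }
  apply is_pseries_unique in HD'. fold D in HD'. lra.
Qed.

Lemma is_derive_0_eq (h : R -> R) (lo hi s t : R) :
  (forall y, lo < y < hi -> is_derive h y 0) -> lo < s < hi -> lo < t < hi -> h s = h t.
Proof.
  intros Hh Hs Ht. destruct (MVT_gen h s t (fun _ => 0)) as [z [_ Hz]]; [| |lra].
  - intros y Hy. apply Hh. unfold Rmin, Rmax in Hy; destruct Rle_dec; lra.
  - intros y Hy. apply continuity_pt_filterlim, (ex_derive_continuous h).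
    exists 0. apply Hh. unfold Rmin, Rmax in Hy; destruct Rle_dec; lra.
Qed.

(* the series times (1 - t)^x has derivative 0 *)
Lemma PSeries_nb_coef (x t : R) : 0 < x -> -1 < t < 1 ->
  PSeries (nb_coef x) t = Rpower (1 - t) (- x).
Proof.
  intros Hx Ht.
  set (g := PSeries (nb_coef x)).
  set (e := fun y => exp (x * ln (1 - y))).
  assert (Hconst : forall y, -1 < y < 1 -> is_derive (fun z => g z * e z) y 0).
  { intros y Hy.
    assert (Hr : Rbar_lt (Rabs y) (CV_radius (nb_coef x))).
    { rewrite CV_radius_nb_coef by exact Hx. simpl. unfold Rabs; destruct Rcase_abs; lra. }
    assert (He : is_derive e y (x * (-1 * / (1 - y)) * e y)) by (unfold e; auto_derive; [lra | reflexivity]).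
    replace 0 with (PSeries (PS_derive (nb_coef x)) y * e y + g y * (x * (-1 * / (1 - y)) * e y)).
    - exact (is_derive_mult g e y _ _ (is_derive_PSeries _ _ Hr) He Rmult_comm).
    - pose proof (PSeries_derive_nb_coef x y Hx Hy) as H. fold g in H.
      transitivity (e y / (1 - y) * ((1 - y) * PSeries (PS_derive (nb_coef x)) y - x * g y));
        [field; lra | rewrite H; ring]. }
  assert (Ht1 := is_derive_0_eq _ (-1) 1 t 0 Hconst Ht ltac:(lra)). cbv beta in Ht1.
  unfold g in Ht1 at 2. rewrite PSeries_0 in Ht1. unfold e in Ht1.
  rewrite Rminus_0_r, ln_1, Rmult_0_r, exp_0 in Ht1. unfold nb_coef in Ht1. simpl in Ht1.
  unfold Rpower. rewrite Ropp_mult_distr_l_reverse, exp_Ropp.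
  pose proof (exp_pos (x * ln (1 - t))). apply Rmult_eq_reg_r with (exp (x * ln (1 - t))); [|lra].
  fold g. rewrite Ht1. field. lra.
Qed.

Lemma Rpower_div_pow (y z d : R) : 0 < y -> 0 < z -> Rpower y d * Rpower z (- d) = Rpower (y / z) d.
Proof. intros Hy Hz. unfold Rpower. rewrite <- exp_plus, ln_div by assumption. f_equal; ring. Qed.

Lemma nb_pmf_0 (p : R) (k : nat) : nb_pmf p 0 k = dirac0 k.
Proof.
  unfold nb_pmf, dirac0, Rpower. rewrite Rmult_0_l, exp_0.
  destruct k as [|k]; [simpl; field|]. simpl Nat.eqb.
  replace (rising 0 (S k)) with 0; [unfold Rdiv; ring|].
  induction k as [|k IH]; simpl in *; [ring | rewrite <- IH; ring].
Qed.

Lemma rising_nonneg (x : R) (k : nat) : 0 <= x -> 0 <= rising x k.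
Proof.
  intros Hx; induction k as [|k IH]; simpl; [lra|].
  apply Rmult_le_pos; [exact IH | pose proof (pos_INR k); lra].
Qed.

Lemma nb_pmf_nonneg (p x : R) (k : nat) : 0 <= p < 1 -> 0 <= x -> 0 <= nb_pmf p x k.
Proof.
  intros Hp Hx. unfold nb_pmf. apply Rmult_le_pos; [apply Rmult_le_pos|].
  - apply Rdiv_le_0_compat; [apply rising_nonneg, Hx | apply lt_0_INR, lt_O_fact].
  - left; unfold Rpower; apply exp_pos.
  - apply pow_le, Hp.
Qed.

Lemma has_pgf_nb (p d : R) : 0 < p < 1 -> 0 <= d ->
  has_pgf (nb_pmf p d) (fun s => Rpower ((1 - p) / (1 - p * s)) d).
Proof.
  intros Hp [Hd|<-] s Hs.
  - assert (Hser : is_pseries (nb_coef d) (p * s) (PSeries (nb_coef d) (p * s))).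
    { apply PSeries_correct, CV_radius_inside. rewrite CV_radius_nb_coef by exact Hd. simpl.
      rewrite Rabs_pos_eq; nra. }
    rewrite PSeries_nb_coef in Hser by (exact Hd || nra).
    apply is_pseries_R, is_series_Reals in Hser.
    apply (infinite_sum_scal_l _ (Rpower (1 - p) d)) in Hser.
    rewrite Rpower_div_pow in Hser by nra.
    refine (infinite_sum_ext _ _ _ _ Hser). intros k. unfold nb_pmf. rewrite Rpow_mult_distr.
    fold (nb_coef d k). ring.
  - unfold Rpower; rewrite Rmult_0_l, exp_0.
    refine (infinite_sum_ext _ _ _ _ (has_pgf_dirac0 s Hs)). intros k; rewrite nb_pmf_0; reflexivity.
Qed.

(** * Riemann integrals over (0, +oo) *)

Lemma ex_RInt_sub (f : R -> R) (a b c d : R) :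
  a <= c -> c <= d -> d <= b -> ex_RInt f a b -> ex_RInt f c d.
Proof.
  intros Hac Hcd Hdb H.
  apply (ex_RInt_Chasles_2 (V := R_CompleteNormedModule) f a c d); [lra|].
  apply (ex_RInt_Chasles_1 (V := R_CompleteNormedModule) f a d b); [lra | exact H].
Qed.

Definition grid_floor (u h x : R) : R := u + h * IZR (Int_part ((x - u) / h)).

Lemma grid_floor_bounds (u h x : R) : 0 < h -> x - h < grid_floor u h x <= x.
Proof.
  intros Hh. unfold grid_floor. destruct (base_Int_part ((x - u) / h)) as [H1 H2].
  assert (E : x - u = h * ((x - u) / h)) by (field; lra).
  split; [|apply Rmult_le_compat_l with (r := h) in H1]; nra.
Qed.

Lemma grid_floor_cell (u h x : R) (m : nat) :
  0 < h -> u + INR m * h < x < u + INR (S m) * h -> grid_floor u h x = u + INR m * h.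
Proof.
  intros Hh Hx. unfold grid_floor. rewrite S_INR in Hx.
  rewrite <- (Int_part_spec ((x - u) / h) (Z.of_nat m)); [rewrite <- INR_IZR_INZ; ring|].
  rewrite <- INR_IZR_INZ. split.
  - apply Rmult_lt_reg_r with h; [exact Hh|].
    unfold Rdiv. rewrite Rmult_minus_distr_r, Rmult_assoc, Rinv_l; lra.
  - apply Rmult_le_reg_r with h; [exact Hh|]. unfold Rdiv. rewrite Rmult_assoc, Rinv_l; lra.
Qed.

Lemma ex_RInt_grid_floor_mult (f : R -> R) (u h : R) (m : nat) :
  0 < h -> ex_RInt f u (u + INR m * h) ->
  ex_RInt (fun x => grid_floor u h x * f x) u (u + INR m * h).
Proof.
  intros Hh. induction m as [|m IH]; intros Hf.
  - simpl. rewrite Rmult_0_l, Rplus_0_r. apply ex_RInt_point.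
  - assert (Hm : u + INR m * h <= u + INR (S m) * h) by (rewrite S_INR; lra).
    pose proof (pos_INR m).
    apply ex_RInt_Chasles with (u + INR m * h).
    + apply IH, (ex_RInt_sub f u (u + INR (S m) * h)); [lra | nra | exact Hm | exact Hf].
    + apply (ex_RInt_ext (fun x => (u + INR m * h) * f x)).
      * intros x Hx. rewrite Rmin_left, Rmax_right in Hx by exact Hm.
        rewrite (grid_floor_cell u h x m); auto.
      * apply (ex_RInt_scal (V := R_NormedModule)), (ex_RInt_sub f u (u + INR (S m) * h));
          [nra | exact Hm | lra | exact Hf].
Qed.

(* x f(x) is the uniform limit of (grid_floor u h x) f(x), integrable cell by cell, as h -> 0 *)
Lemma ex_RInt_mult_id (f : R -> R) (u v : R) :
  u <= v -> ex_RInt f u v -> ex_RInt (fun x => x * f x) u v.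
Proof.
  intros [Huv|<-] Hf; [|apply ex_RInt_point].
  (* [f] truncated to [u, v], so that convergence on [u, v] is uniform convergence on R *)
  set (ft := fun x => if Rle_dec u x then if Rle_dec x v then f x else 0 else 0).
  assert (Hft : forall x, u <= x <= v -> ft x = f x).
  { intros x Hx. unfold ft. do 2 (destruct Rle_dec; [|lra]). reflexivity. }
  destruct (ex_RInt_ub f u v Hf) as [K HK].
  rewrite Rmin_left, Rmax_right in HK by lra.
  assert (HKt : forall t, Rabs (ft t) <= K).
  { intros t. assert (Hu : Rabs (f u) <= K) by (apply HK; lra).
    unfold ft. destruct Rle_dec; [destruct Rle_dec|];
      [apply HK; lra | | ]; rewrite Rabs_R0; pose proof (Rabs_pos (f u)); lra. }
  set (h := fun N : nat => (v - u) / INR (S N)).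
  assert (Hh : forall N, 0 < h N) by (intros N; apply Rdiv_lt_0_compat; [lra | apply lt_0_INR; lia]).
  assert (Hend : forall N, u + INR (S N) * h N = v) by (intros N; unfold h; field; apply not_0_INR; lia).
  set (F := fun N x => grid_floor u (h N) x * ft x).
  assert (HF : forall N, ex_RInt (F N) u v).
  { intros N. rewrite <- (Hend N). apply ex_RInt_grid_floor_mult; [apply Hh|].
    rewrite Hend. apply (ex_RInt_ext f); [|exact Hf].
    intros x Hx. rewrite Rmin_left, Rmax_right in Hx by lra. symmetry; apply Hft; lra. }
  assert (Hcv : filterlim F eventually (locally (fun x => x * ft x))).
  { apply filterlim_locally. intros eps.
    assert (Hlim : is_lim_seq (fun N => (v - u) * K * / INR (S N)) 0).
    { replace (Finite 0) with (Rbar_mult ((v - u) * K) 0) by (simpl; f_equal; ring).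
      apply is_lim_seq_scal_l, is_lim_seq_inv_S. }
    apply is_lim_seq_spec in Hlim. destruct (Hlim eps) as [N0 HN0].
    exists N0. intros N HN t. change (Rabs (F N t - t * ft t) < eps).
    specialize (HN0 N HN). rewrite Rminus_0_r in HN0.
    eapply Rle_lt_trans; [|exact (Rle_lt_trans _ _ _ (RRle_abs _) HN0)].
    unfold F. rewrite <- Rmult_minus_distr_r, Rabs_mult.
    replace ((v - u) * K * / INR (S N)) with (h N * K) by (unfold h, Rdiv; ring).
    pose proof (grid_floor_bounds u (h N) t (Hh N)). pose proof (Hh N).
    apply Rmult_le_compat; [apply Rabs_pos | apply Rabs_pos | | apply HKt].
    unfold Rabs; destruct Rcase_abs; lra. }
  destruct (filterlim_RInt F u v eventually eventually_filter _ (fun N => RInt (F N) u v)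
              (fun N => RInt_correct _ _ _ (HF N)) Hcv) as [I [_ HI]].
  exists I. apply (is_RInt_ext (fun x => x * ft x)); [|exact HI].
  intros x Hx. rewrite Rmin_left, Rmax_right in Hx by lra. rewrite Hft by lra. reflexivity.
Qed.

Definition ex_RInt_pos (g : R -> R) : Prop :=
  forall u v, 0 < u -> u <= v -> ex_RInt g u v.

Definition RInt_cv_0_oo (g : R -> R) (l : R) : Prop :=
  forall eps, eps > 0 -> exists dl, dl > 0 /\ exists M, dl < M /\
    forall u v, 0 < u < dl -> M < v -> Rabs (RInt g u v - l) < eps.

(* [improper_int0] in terms of Coquelicot's [RInt], which needs no integrability proof *)
Lemma improper_int0_iff (g : R -> R) (l : R) :
  improper_int0 g l <-> ex_RInt_pos g /\ RInt_cv_0_oo g l.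
Proof.
  split.
  - intros H. split.
    + intros u v Hu Huv. destruct (H 1 ltac:(lra)) as [dl [Hdl [M [HM HH]]]].
      destruct (HH (Rmin u (dl / 2)) (Rmax v (M + 1))) as [pr _].
      * split; [apply Rmin_glb_lt | apply Rle_lt_trans with (dl / 2); [apply Rmin_r|]]; lra.
      * apply Rlt_le_trans with (M + 1); [lra | apply Rmax_r].
      * apply (ex_RInt_sub g (Rmin u (dl / 2)) (Rmax v (M + 1)));
          [apply Rmin_l | exact Huv | apply Rmax_l |].
        exact (ex_RInt_Reals_1 _ _ _ pr).
    + intros eps Heps. destruct (H eps Heps) as [dl [Hdl [M [HM HH]]]].
      exists (Rmin dl (M / 2)). split; [apply Rmin_glb_lt; lra|].
      exists M. split; [apply Rle_lt_trans with (M / 2); [apply Rmin_r | lra]|].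
      intros u v Hu Hv. destruct (HH u v) as [pr Hpr]; [pose proof (Rmin_l dl (M / 2)); lra | exact Hv |].
      rewrite (RInt_Reals g u v pr). exact Hpr.
  - intros [HI HC] eps Heps. destruct (HC eps Heps) as [dl [Hdl [M [HM HH]]]].
    exists dl. split; [exact Hdl|]. exists M. split; [lra|].
    intros u v Hu Hv. assert (Hex : ex_RInt g u v) by (apply HI; lra).
    exists (ex_RInt_Reals_0 _ _ _ Hex). rewrite <- RInt_Reals. exact (HH u v Hu Hv).
Qed.

Lemma ex_RInt_pos_ext (g1 g2 : R -> R) :
  (forall x, g1 x = g2 x) -> ex_RInt_pos g1 -> ex_RInt_pos g2.
Proof. intros E H u v Hu Huv. apply (ex_RInt_ext g1); auto. Qed.

Lemma ex_RInt_pos_scal (g : R -> R) (k : R) :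
  ex_RInt_pos g -> ex_RInt_pos (fun x => k * g x).
Proof. intros H u v Hu Huv. apply (ex_RInt_scal (V := R_NormedModule)); auto. Qed.

Lemma ex_RInt_pos_sum (F : nat -> R -> R) (N : nat) :
  (forall n, ex_RInt_pos (F n)) -> ex_RInt_pos (fun x => sum_f_R0 (fun n => F n x) N).
Proof.
  intros H u v Hu Huv. induction N as [|N IH]; simpl; [apply H; auto|].
  apply (ex_RInt_plus (V := R_NormedModule)); auto. apply H; auto.
Qed.

Lemma ex_RInt_pos_pow_mult (g : R -> R) (n : nat) :
  ex_RInt_pos g -> ex_RInt_pos (fun x => x ^ n * g x).
Proof.
  intros H. induction n as [|n IH].
  - apply (ex_RInt_pos_ext g); [intros; simpl; ring | exact H].
  - apply (ex_RInt_pos_ext (fun x => x * (x ^ n * g x))); [intros; simpl; ring|].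
    intros u v Hu Huv. apply ex_RInt_mult_id; auto.
Qed.

Section NonnegIntegrand.
Variable g : R -> R.
Hypothesis g_ge0 : forall x, 0 < x -> 0 <= g x.
Hypothesis g_int : ex_RInt_pos g.

Lemma RInt_pos_ge0 (u v : R) : 0 < u -> u <= v -> 0 <= RInt g u v.
Proof. intros Hu Huv. apply RInt_ge_0; auto. intros x Hx; apply g_ge0; lra. Qed.

Lemma RInt_pos_mono (u v u' v' : R) :
  0 < u' -> u' <= u -> u <= v -> v <= v' -> RInt g u v <= RInt g u' v'.
Proof.
  intros H1 H2 H3 H4.
  rewrite <- (RInt_Chasles g u' u v'), <- (RInt_Chasles g u v v'); try (apply g_int; lra).
  pose proof (RInt_pos_ge0 u' u H1 H2). pose proof (RInt_pos_ge0 v v' ltac:(lra) H4).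
  change (RInt g u v <= RInt g u' u + (RInt g u v + RInt g v v')). lra.
Qed.

Lemma RInt_le_cv_0_oo (l u v : R) : RInt_cv_0_oo g l -> 0 < u -> u <= v -> RInt g u v <= l.
Proof.
  intros HC Hu Huv. apply Rnot_lt_le; intros Hlt.
  destruct (HC (RInt g u v - l)) as [dl [Hdl [M [HM HH]]]]; [lra|].
  set (u' := Rmin u (dl / 2)). set (v' := Rmax v (M + 1)).
  assert (Hu' : 0 < u' < dl).
  { unfold u'. split; [apply Rmin_glb_lt | apply Rle_lt_trans with (dl / 2); [apply Rmin_r|]]; lra. }
  assert (Hv' : M < v') by (unfold v'; apply Rlt_le_trans with (M + 1); [lra | apply Rmax_r]).
  specialize (HH u' v' Hu' Hv').
  assert (RInt g u v <= RInt g u' v')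
    by (apply RInt_pos_mono; [lra | apply Rmin_l | exact Huv | apply Rmax_l]).
  unfold Rabs in HH; destruct Rcase_abs in HH; lra.
Qed.

(* the limit is the supremum of the integrals over compact subintervals *)
Lemma RInt_cv_0_oo_bounded (K : R) :
  (forall u v, 0 < u -> u <= v -> RInt g u v <= K) -> {l : R | RInt_cv_0_oo g l /\ 0 <= l}.
Proof.
  intros HK.
  set (E := fun y => exists u v, 0 < u /\ u <= v /\ y = RInt g u v).
  destruct (completeness E) as [l [Hub Hlub]].
  - exists K. intros y [u [v [Hu [Huv ->]]]]. auto.
  - exists (RInt g 1 1), 1, 1. repeat split; lra.
  - exists l. split.
    + intros eps Heps.
      assert (Hex : exists u0 v0, 0 < u0 /\ u0 <= v0 /\ l - eps < RInt g u0 v0).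
      { apply Classical_Prop.NNPP. intros Hn.
        assert (l <= l - eps); [|lra].
        apply Hlub. intros y [u [v [Hu [Huv ->]]]]. apply Rnot_lt_le. intros Hlt.
        apply Hn. exists u, v. auto. }
      destruct Hex as [u0 [v0 [Hu0 [Huv0 Hlt]]]].
      exists u0. split; [lra|]. exists (v0 + 1). split; [lra|]. intros u v Hu Hv.
      assert (A : RInt g u v <= l) by (apply Hub; exists u, v; repeat split; lra).
      assert (B : RInt g u0 v0 <= RInt g u v) by (apply RInt_pos_mono; lra).
      unfold Rabs; destruct Rcase_abs; lra.
    + apply Rle_trans with (RInt g 1 1); [apply RInt_pos_ge0; lra|].
      apply Hub. exists 1, 1. repeat split; lra.
Qed.

End NonnegIntegrand.

Lemma RInt_cv_0_oo_le (g1 g2 : R -> R) (l1 l2 : R) :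
  ex_RInt_pos g1 -> ex_RInt_pos g2 -> (forall x, 0 < x -> g1 x <= g2 x) ->
  RInt_cv_0_oo g1 l1 -> RInt_cv_0_oo g2 l2 -> l1 <= l2.
Proof.
  intros H1 H2 Hle C1 C2. apply Rnot_lt_le; intros Hlt.
  set (e := (l1 - l2) / 2).
  destruct (C1 e) as [d1 [Hd1 [M1 [HM1 HH1]]]]; [unfold e; lra|].
  destruct (C2 e) as [d2 [Hd2 [M2 [HM2 HH2]]]]; [unfold e; lra|].
  set (u := Rmin d1 d2 / 2). set (v := Rmax M1 M2 + 1).
  pose proof (Rmin_l d1 d2); pose proof (Rmin_r d1 d2); pose proof (Rmin_glb_lt d1 d2 0 Hd1 Hd2).
  pose proof (Rmax_l M1 M2); pose proof (Rmax_r M1 M2).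
  specialize (HH1 u v ltac:(unfold u; lra) ltac:(unfold v; lra)).
  specialize (HH2 u v ltac:(unfold u; lra) ltac:(unfold v; lra)).
  assert (RInt g1 u v <= RInt g2 u v).
  { apply RInt_le; [unfold u, v; lra | apply H1 | apply H2 | intros x Hx; apply Hle];
      unfold u, v in *; lra. }
  unfold Rabs in HH1, HH2; destruct Rcase_abs in HH1; destruct Rcase_abs in HH2; unfold e in *; lra.
Qed.

Lemma RInt_cv_0_oo_plus (g1 g2 : R -> R) (l1 l2 : R) :
  ex_RInt_pos g1 -> ex_RInt_pos g2 -> RInt_cv_0_oo g1 l1 -> RInt_cv_0_oo g2 l2 ->
  RInt_cv_0_oo (fun x => g1 x + g2 x) (l1 + l2).
Proof.
  intros H1 H2 C1 C2 eps Heps.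
  destruct (C1 (eps / 2)) as [d1 [Hd1 [M1 [HM1 HH1]]]]; [lra|].
  destruct (C2 (eps / 2)) as [d2 [Hd2 [M2 [HM2 HH2]]]]; [lra|].
  pose proof (Rmin_l d1 d2); pose proof (Rmin_r d1 d2); pose proof (Rmax_l M1 M2); pose proof (Rmax_r M1 M2).
  exists (Rmin d1 d2). split; [apply Rmin_glb_lt; lra|].
  exists (Rmax M1 M2). split; [lra|].
  intros u v Hu Hv.
  rewrite (RInt_plus (V := R_CompleteNormedModule) g1 g2) by (first [apply H1 | apply H2]; lra).
  change (plus ?a ?b) with (a + b).
  specialize (HH1 u v ltac:(lra) ltac:(lra)). specialize (HH2 u v ltac:(lra) ltac:(lra)).
  replace (RInt g1 u v + RInt g2 u v - (l1 + l2)) with ((RInt g1 u v - l1) + (RInt g2 u v - l2)) by ring.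
  eapply Rle_lt_trans; [apply Rabs_triang | lra].
Qed.

Lemma RInt_cv_0_oo_scal (g : R -> R) (l k : R) :
  ex_RInt_pos g -> RInt_cv_0_oo g l -> RInt_cv_0_oo (fun x => k * g x) (k * l).
Proof.
  intros H C eps Heps. pose proof (Rabs_pos k).
  destruct (C (eps / (Rabs k + 1))) as [dl [Hdl [M [HM HH]]]]; [apply Rdiv_lt_0_compat; lra|].
  exists dl. split; [exact Hdl|]. exists M. split; [exact HM|]. intros u v Hu Hv.
  rewrite (RInt_scal (V := R_CompleteNormedModule)) by (apply H; lra).
  change (scal k (RInt g u v)) with (k * RInt g u v).
  replace (k * RInt g u v - k * l) with (k * (RInt g u v - l)) by ring.
  specialize (HH u v Hu Hv). rewrite Rabs_mult.
  apply Rle_lt_trans with ((Rabs k + 1) * Rabs (RInt g u v - l));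
    [pose proof (Rabs_pos (RInt g u v - l)); nra|].
  apply Rmult_lt_reg_l with (/ (Rabs k + 1)); [apply Rinv_0_lt_compat; lra|].
  rewrite <- Rmult_assoc, Rinv_l, Rmult_1_l by lra. unfold Rdiv in HH. lra.
Qed.

Lemma RInt_cv_0_oo_sum (F : nat -> R -> R) (l : nat -> R) (N : nat) :
  (forall n, ex_RInt_pos (F n)) -> (forall n, RInt_cv_0_oo (F n) (l n)) ->
  RInt_cv_0_oo (fun x => sum_f_R0 (fun n => F n x) N) (sum_f_R0 l N).
Proof.
  intros H C. induction N as [|N IH]; simpl; [apply C|].
  apply RInt_cv_0_oo_plus; auto. apply ex_RInt_pos_sum, H.
Qed.

(** * Mixed Poisson laws *)

Definition exp_partial (N : nat) (y : R) : R := sum_f_R0 (fun n => y ^ n / INR (fact n)) N.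

Lemma exp_series (y : R) : infinite_sum (fun n => y ^ n / INR (fact n)) (exp y).
Proof.
  unfold exp. destruct (exist_exp y) as [l Hl]; simpl.
  refine (infinite_sum_ext _ _ _ _ Hl). intros n; unfold Rdiv; ring.
Qed.

Lemma exp_term_ge0 (y : R) (n : nat) : 0 <= y -> 0 <= y ^ n / INR (fact n).
Proof. intros Hy. apply Rdiv_le_0_compat; [apply pow_le, Hy | apply lt_0_INR, lt_O_fact]. Qed.

Lemma exp_partial_le (N : nat) (y : R) : 0 <= y -> exp_partial N y <= exp y.
Proof. intros Hy. apply sum_incr; [apply exp_series | intros n; apply exp_term_ge0, Hy]. Qed.

Lemma exp_tail_mono (N : nat) (y z : R) :
  0 <= y <= z -> exp y - exp_partial N y <= exp z - exp_partial N z.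
Proof.
  intros Hyz. cut (exp_partial N z - exp_partial N y <= exp z - exp y); [lra|].
  apply (growing_ineq (fun M => exp_partial M z - exp_partial M y));
    [|exact (CV_minus _ _ _ _ (exp_series z) (exp_series y))].
  intros M. unfold exp_partial. rewrite !tech5.
  assert (y ^ S M / INR (fact (S M)) <= z ^ S M / INR (fact (S M))); [|lra].
  apply Rmult_le_compat_r; [left; apply Rinv_0_lt_compat, lt_0_INR, lt_O_fact | apply pow_incr; lra].
Qed.

Lemma exp_tail_small (z eps : R) : eps > 0 -> exists N, exp z - exp_partial N z < eps.
Proof.
  intros Heps. destruct (exp_series z eps Heps) as [N HN]. exists N.
  specialize (HN N (Nat.le_refl N)). unfold R_dist, exp_partial in *.
  unfold Rabs in HN; destruct Rcase_abs in HN; lra.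
Qed.

Lemma poisson_pmf_ge0 (x : R) (n : nat) : 0 <= x -> 0 <= poisson_pmf x n.
Proof.
  intros Hx. unfold poisson_pmf, Rdiv. rewrite Rmult_assoc.
  apply Rmult_le_pos; [left; apply exp_pos | apply exp_term_ge0, Hx].
Qed.

Lemma poisson_pmf_le1 (x : R) (n : nat) : 0 <= x -> poisson_pmf x n <= 1.
Proof.
  intros Hx. unfold poisson_pmf, Rdiv. rewrite Rmult_assoc.
  rewrite exp_Ropp. pose proof (exp_pos x).
  apply Rle_trans with (/ exp x * exp x); [|rewrite Rinv_l; lra].
  apply Rmult_le_compat_l; [left; apply Rinv_0_lt_compat; lra|].
  exact (infinite_sum_term_le _ _ n (fun k => exp_term_ge0 x k Hx) (exp_series x)).
Qed.

Section MixedPoisson.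
Variables f L : R -> R.
Hypothesis f_ge0 : forall x, 0 < x -> 0 <= f x.
Hypothesis f_laplace : forall t, 0 <= t -> improper_int0 (fun x => exp (- (t * x)) * f x) (L t).

Lemma laplace_ex_RInt_pos (t : R) : 0 <= t -> ex_RInt_pos (fun x => exp (- (t * x)) * f x).
Proof. intros Ht. exact (proj1 (proj1 (improper_int0_iff _ _) (f_laplace t Ht))). Qed.

Lemma laplace_RInt_cv (t : R) : 0 <= t -> RInt_cv_0_oo (fun x => exp (- (t * x)) * f x) (L t).
Proof. intros Ht. exact (proj2 (proj1 (improper_int0_iff _ _) (f_laplace t Ht))). Qed.

Lemma laplace_integrand_ge0 (t x : R) : 0 < x -> 0 <= exp (- (t * x)) * f x.
Proof. intros Hx. apply Rmult_le_pos; [left; apply exp_pos | auto]. Qed.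

Lemma RInt_laplace_le (t u v : R) :
  0 <= t -> 0 < u -> u <= v -> RInt (fun x => exp (- (t * x)) * f x) u v <= L t.
Proof.
  intros Ht Hu Huv. apply RInt_le_cv_0_oo; auto using laplace_ex_RInt_pos, laplace_RInt_cv.
  intros x Hx. apply laplace_integrand_ge0, Hx.
Qed.

Lemma laplace_ge0 (t : R) : 0 <= t -> 0 <= L t.
Proof.
  intros Ht. apply Rle_trans with (RInt (fun x => exp (- (t * x)) * f x) 1 1);
    [apply RInt_pos_ge0; auto using laplace_ex_RInt_pos; try lra | apply RInt_laplace_le; lra].
  intros x Hx. apply laplace_integrand_ge0, Hx.
Qed.

Lemma ex_RInt_pos_poisson_mix (n : nat) : ex_RInt_pos (fun x => f x * poisson_pmf x n).
Proof.
  apply (ex_RInt_pos_ext (fun x => / INR (fact n) * (x ^ n * (exp (- (1 * x)) * f x)))).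
  - intros x. unfold poisson_pmf. rewrite Rmult_1_l. field. apply INR_fact_neq_0.
  - apply ex_RInt_pos_scal, ex_RInt_pos_pow_mult, laplace_ex_RInt_pos. lra.
Qed.

Lemma poisson_mix_ge0 (n : nat) (x : R) : 0 < x -> 0 <= f x * poisson_pmf x n.
Proof. intros Hx. apply Rmult_le_pos; [auto | apply poisson_pmf_ge0; lra]. Qed.

Lemma poisson_mix_exists (n : nat) :
  {p : R | RInt_cv_0_oo (fun x => f x * poisson_pmf x n) p /\ 0 <= p}.
Proof.
  apply (RInt_cv_0_oo_bounded _ (poisson_mix_ge0 n) (ex_RInt_pos_poisson_mix n) (L 0)).
  intros u v Hu Huv. apply Rle_trans with (RInt (fun x => exp (- (0 * x)) * f x) u v).
  - apply RInt_le; [exact Huv | apply ex_RInt_pos_poisson_mix; lra | apply laplace_ex_RInt_pos; lra |].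
    intros x Hx. rewrite Rmult_0_l, Ropp_0, exp_0, Rmult_1_l.
    rewrite <- (Rmult_1_r (f x)) at 2.
    apply Rmult_le_compat_l; [apply f_ge0; lra | apply poisson_pmf_le1; lra].
  - apply RInt_laplace_le; lra.
Qed.

Definition poisson_mix (n : nat) : R := proj1_sig (poisson_mix_exists n).

Lemma poisson_mix_cv (n : nat) : RInt_cv_0_oo (fun x => f x * poisson_pmf x n) (poisson_mix n).
Proof. exact (proj1 (proj2_sig (poisson_mix_exists n))). Qed.

Lemma poisson_mix_nonneg (n : nat) : 0 <= poisson_mix n.
Proof. exact (proj2 (proj2_sig (poisson_mix_exists n))). Qed.

Lemma poisson_mix_improper (n : nat) :
  improper_int0 (fun x => f x * poisson_pmf x n) (poisson_mix n).
Proof. apply improper_int0_iff. split; [apply ex_RInt_pos_poisson_mix | apply poisson_mix_cv]. Qed.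

Section AtPoint.
Variable s : R.
Hypothesis s_01 : 0 <= s <= 1.

Let G (N : nat) (x : R) : R := sum_f_R0 (fun n => s ^ n * (f x * poisson_pmf x n)) N.

Lemma G_exp_partial (N : nat) (x : R) : G N x = f x * exp (- x) * exp_partial N (s * x).
Proof.
  unfold G, exp_partial. rewrite scal_sum. apply sum_eq. intros n _.
  unfold poisson_pmf. rewrite Rpow_mult_distr. field. apply INR_fact_neq_0.
Qed.

Lemma laplace_1_minus (x : R) : exp (- ((1 - s) * x)) * f x = f x * exp (- x) * exp (s * x).
Proof. rewrite Rmult_assoc, <- exp_plus, Rmult_comm. f_equal. f_equal. ring. Qed.

Lemma ex_RInt_pos_G (N : nat) : ex_RInt_pos (G N).
Proof. apply ex_RInt_pos_sum. intros n. apply ex_RInt_pos_scal, ex_RInt_pos_poisson_mix. Qed.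

Lemma G_RInt_cv (N : nat) : RInt_cv_0_oo (G N) (sum_f_R0 (fun n => poisson_mix n * s ^ n) N).
Proof.
  rewrite (sum_eq _ (fun n => s ^ n * poisson_mix n)) by (intros; ring).
  apply (RInt_cv_0_oo_sum (fun n x => s ^ n * (f x * poisson_pmf x n))).
  - intros n. apply ex_RInt_pos_scal, ex_RInt_pos_poisson_mix.
  - intros n. apply RInt_cv_0_oo_scal; [apply ex_RInt_pos_poisson_mix | apply poisson_mix_cv].
Qed.

Lemma G_ge0 (N : nat) (x : R) : 0 < x -> 0 <= G N x.
Proof.
  intros Hx. rewrite G_exp_partial. apply Rmult_le_pos; [apply Rmult_le_pos; [auto | left; apply exp_pos]|].
  apply cond_pos_sum. intros n. apply exp_term_ge0. nra.
Qed.

Lemma poisson_mix_partial_pgf_le (N : nat) :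
  sum_f_R0 (fun n => poisson_mix n * s ^ n) N <= L (1 - s).
Proof.
  apply (RInt_cv_0_oo_le (G N) (fun x => exp (- ((1 - s) * x)) * f x));
    [apply ex_RInt_pos_G | apply laplace_ex_RInt_pos; lra | | apply G_RInt_cv | apply laplace_RInt_cv; lra].
  intros x Hx. rewrite G_exp_partial, laplace_1_minus. apply Rmult_le_compat_l.
  - apply Rmult_le_pos; [auto | left; apply exp_pos].
  - apply exp_partial_le. nra.
Qed.

Lemma poisson_mix_partial_pgf_ge (eps : R) : eps > 0 ->
  exists N, L (1 - s) < sum_f_R0 (fun n => poisson_mix n * s ^ n) N + eps.
Proof.
  intros Heps.
  assert (HL1 : 0 <= L 1) by (apply laplace_ge0; lra).
  destruct (laplace_RInt_cv (1 - s) ltac:(lra) (eps / 2)) as [dl [Hdl [M [HM HH]]]]; [lra|].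
  set (u := dl / 2). set (v := M + 1).
  specialize (HH u v ltac:(unfold u; lra) ltac:(unfold v; lra)).
  destruct (exp_tail_small (s * v) (eps / (2 * (L 1 + 1)))) as [N HN]; [apply Rdiv_lt_0_compat; lra|].
  exists N. set (T := exp (s * v) - exp_partial N (s * v)).
  assert (Huv : 0 < u <= v) by (unfold u, v; lra).
  assert (HT0 : 0 <= T) by (unfold T; pose proof (exp_partial_le N (s * v) ltac:(nra)); lra).
  assert (He : ex_RInt (fun x => exp (- ((1 - s) * x)) * f x) u v) by (apply laplace_ex_RInt_pos; lra).
  assert (He1 : ex_RInt (fun x => exp (- (1 * x)) * f x) u v) by (apply laplace_ex_RInt_pos; lra).
  assert (HGN : ex_RInt (G N) u v) by (apply ex_RInt_pos_G; lra).
  (* on [u, v] the truncation error of the exponential series is at most its value at [v] *)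
  assert (Hdiff : RInt (fun x => exp (- ((1 - s) * x)) * f x) u v - RInt (G N) u v <= T * L 1).
  { rewrite <- (RInt_minus (V := R_CompleteNormedModule)) by assumption.
    apply Rle_trans with (RInt (fun x => T * (exp (- (1 * x)) * f x)) u v).
    - apply RInt_le; [lra | apply (ex_RInt_minus (V := R_NormedModule)); assumption
      | apply (ex_RInt_scal (V := R_NormedModule)); assumption |].
      intros x Hx. change (minus ?a ?b) with (a - b).
      rewrite G_exp_partial, laplace_1_minus, Rmult_1_l.
      assert (exp (s * x) - exp_partial N (s * x) <= T) by (apply exp_tail_mono; nra).
      assert (0 <= f x * exp (- x)) by (apply Rmult_le_pos; [apply f_ge0; lra | left; apply exp_pos]).
      nra.
    - rewrite (RInt_scal (V := R_CompleteNormedModule)) by assumption.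
      apply Rmult_le_compat_l; [exact HT0|].
      apply RInt_laplace_le; lra. }
  assert (HTL : T * L 1 < eps / 2).
  { apply Rle_lt_trans with (T * (L 1 + 1)); [nra|].
    apply Rlt_le_trans with (eps / (2 * (L 1 + 1)) * (L 1 + 1));
      [apply Rmult_lt_compat_r; [lra | exact HN] | right; field; lra]. }
  assert (HG : RInt (G N) u v <= sum_f_R0 (fun n => poisson_mix n * s ^ n) N)
    by (apply RInt_le_cv_0_oo; [apply G_ge0 | apply ex_RInt_pos_G | apply G_RInt_cv | |]; lra).
  unfold Rabs in HH; destruct Rcase_abs in HH; lra.
Qed.

End AtPoint.

Lemma has_pgf_poisson_mix : has_pgf poisson_mix (fun s => L (1 - s)).
Proof.
  intros s Hs.
  destruct (infinite_sum_bounded_nonneg (fun n => poisson_mix n * s ^ n) (L (1 - s))) as [P [HP HPL]].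
  - intros n. apply Rmult_le_pos; [apply poisson_mix_nonneg | apply pow_le; lra].
  - apply poisson_mix_partial_pgf_le, Hs.
  - replace (L (1 - s)) with P; [exact HP|].
    apply Rle_antisym; [exact HPL|]. apply Rnot_lt_le. intros Hlt.
    destruct (poisson_mix_partial_pgf_ge s Hs (L (1 - s) - P)) as [N HN]; [lra|].
    pose proof (sum_incr _ N _ HP
                  (fun n => Rmult_le_pos _ _ (poisson_mix_nonneg n) (pow_le s n ltac:(lra)))).
    lra.
Qed.

End MixedPoisson.

(** * The three representations of TDL(a, b, c, d) *)

Section TDL.
Variables a b c d : R.
Hypothesis a_neg : a < 0.
Hypothesis b_pos : 0 < b.
Hypothesis c_01 : 0 < c < 1.
Hypothesis d_pos : 0 < d.

Let B : R := b * d * Rpower (1 - c) a.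
Let outer_pgf (y : R) : R := Rpower (1 + B * (1 - y)) (- (1 / d)).
Let inner_pgf (s : R) : R := Rpower ((1 - c) / (1 - c * s)) (- a).
Let gamma_laplace (n : nat) (t : R) : R := Rpower (1 + c * t / (1 - c)) (a * INR n).

Lemma B_pos : 0 < B.
Proof. unfold B. pose proof (exp_pos (a * ln (1 - c))). unfold Rpower. apply Rmult_lt_0_compat; nra. Qed.

Lemma inner_pgf_01 (s : R) : 0 <= s <= 1 -> 0 <= inner_pgf s <= 1.
Proof.
  intros Hs. unfold inner_pgf, Rpower. split; [left; apply exp_pos|].
  assert (Hq : 0 < (1 - c) / (1 - c * s) <= 1).
  { split; [apply Rdiv_lt_0_compat; nra|]. apply Rmult_le_reg_r with (1 - c * s); [nra|].
    unfold Rdiv. rewrite Rmult_assoc, Rinv_l; nra. }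
  assert (Hln : ln ((1 - c) / (1 - c * s)) <= 0).
  { destruct (proj2 Hq) as [Hlt|Heq]; [|rewrite Heq, ln_1; lra].
    left; rewrite <- ln_1; apply ln_increasing; lra. }
  assert (Hle : - a * ln ((1 - c) / (1 - c * s)) <= 0) by nra.
  destruct Hle as [Hlt|Heq]; [|rewrite Heq, exp_0; lra].
  pose proof (exp_increasing _ _ Hlt) as H. rewrite exp_0 in H. lra.
Qed.

Lemma inner_pgf_pow (s : R) (n : nat) : 0 <= s <= 1 ->
  Rpower ((1 - c) / (1 - c * s)) (- a * INR n) = inner_pgf s ^ n.
Proof.
  intros Hs. unfold inner_pgf. rewrite <- Rpower_mult. apply Rpower_pow. unfold Rpower; apply exp_pos.
Qed.

Lemma gamma_laplace_pow (s : R) (n : nat) : 0 <= s <= 1 ->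
  Rpower (1 + c * (1 - s) / (1 - c)) (a * INR n) = inner_pgf s ^ n.
Proof.
  intros Hs. rewrite <- inner_pgf_pow by exact Hs.
  replace (1 + c * (1 - s) / (1 - c)) with (/ ((1 - c) / (1 - c * s))) by (field; split; nra).
  unfold Rpower. rewrite ln_Rinv by (apply Rdiv_lt_0_compat; nra). f_equal; ring.
Qed.

Lemma tdl_pgf_comp (s : R) : 0 <= s <= 1 -> tdl_pgf a b c d s = outer_pgf (inner_pgf s).
Proof.
  intros Hs. unfold tdl_pgf, outer_pgf, sgn. destruct (Rlt_dec a 0); [|lra]. f_equal.
  assert (E : B * inner_pgf s = b * d * Rpower (1 - c * s) a).
  { unfold B, inner_pgf, Rpower. rewrite !Rmult_assoc, <- exp_plus, ln_div by nra.
    do 3 f_equal. ring. }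
  unfold B in E |- *. lra.
Qed.

Lemma pi0_01 : 0 < pi0 a b c d < 1.
Proof.
  pose proof B_pos. unfold pi0; fold B. split; [apply Rdiv_lt_0_compat; lra|].
  apply Rmult_lt_reg_r with (1 + B); [lra|]. unfold Rdiv. rewrite Rmult_assoc, Rinv_l; lra.
Qed.

Lemma has_pgf_nb_pi0 : has_pgf (nb_pmf (pi0 a b c d) (1 / d)) outer_pgf.
Proof.
  intros y Hy. pose proof B_pos.
  assert (Hnb := has_pgf_nb (pi0 a b c d) (1 / d) pi0_01 ltac:(left; apply Rdiv_lt_0_compat; lra) y Hy).
  replace (outer_pgf y) with (Rpower ((1 - pi0 a b c d) / (1 - pi0 a b c d * y)) (1 / d)); [exact Hnb|].
  unfold outer_pgf, pi0; fold B.
  replace ((1 - B / (1 + B)) / (1 - B / (1 + B) * y)) with (/ (1 + B * (1 - y))) by (field; split; nra).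
  unfold Rpower. rewrite ln_Rinv by nra. f_equal; ring.
Qed.

Lemma tdl_of_compound (pN : nat -> R) (q : nat -> nat -> R) :
  (forall n, 0 <= pN n) -> has_pgf pN outer_pgf ->
  (forall n k, 0 <= q n k) -> (forall n, has_pgf (q n) (fun s => inner_pgf s ^ n)) ->
  exists pX, (forall k, infinite_sum (fun n => pN n * q n k) (pX k)) /\ has_pgf pX (tdl_pgf a b c d).
Proof.
  intros HpN HPN Hq HY.
  destruct (compound_pgf pN outer_pgf q inner_pgf HpN HPN Hq HY inner_pgf_01) as [pX [HX HXpgf]].
  exists pX. split; [exact HX|]. intros s Hs. rewrite tdl_pgf_comp by exact Hs. exact (HXpgf s Hs).
Qed.

Lemma tdl_random_sum :
  exists pS, (forall k, infinite_sum
      (fun n => nb_pmf (pi0 a b c d) (1 / d) n * convpow (nb_pmf c (- a)) n k) (pS k))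
    /\ has_pgf pS (tdl_pgf a b c d).
Proof.
  pose proof pi0_01. assert (Hd : 0 <= 1 / d) by (left; apply Rdiv_lt_0_compat; lra).
  apply tdl_of_compound; [intros; apply nb_pmf_nonneg; lra | apply has_pgf_nb_pi0 | |].
  - intros n k. apply convpow_nonneg. intros j. apply nb_pmf_nonneg; lra.
  - intros n. apply has_pgf_convpow; [intros j; apply nb_pmf_nonneg; lra | apply has_pgf_nb; lra].
Qed.

Lemma tdl_nb_mixture :
  exists pX, (forall k, infinite_sum
      (fun n => nb_pmf (pi0 a b c d) (1 / d) n * nb_pmf c (- a * INR n) k) (pX k))
    /\ has_pgf pX (tdl_pgf a b c d).
Proof.
  pose proof pi0_01. assert (Hd : 0 <= 1 / d) by (left; apply Rdiv_lt_0_compat; lra).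
  apply tdl_of_compound; [intros; apply nb_pmf_nonneg; lra | apply has_pgf_nb_pi0 | |].
  - intros n k. apply nb_pmf_nonneg; [lra | pose proof (pos_INR n); nra].
  - intros n s Hs. rewrite <- inner_pgf_pow by exact Hs.
    apply has_pgf_nb; [lra | pose proof (pos_INR n); nra | exact Hs].
Qed.

Lemma tdl_poisson_gamma (f1 : R -> R) (h : nat -> R -> R) :
  density_with_laplace f1 (fun t => Rpower (1 + B * t) (- (1 / d))) ->
  (forall n, (1 <= n)%nat -> density_with_laplace (h n) (gamma_laplace n)) ->
  exists (pN : nat -> R) (q : nat -> nat -> R) (pX : nat -> R),
    (forall n, improper_int0 (fun g => f1 g * poisson_pmf g n) (pN n)) /\
    (forall k, q O k = dirac0 k) /\
    (forall n k, (1 <= n)%nat -> improper_int0 (fun y => h n y * poisson_pmf y k) (q n k)) /\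
    (forall k, infinite_sum (fun n => pN n * q n k) (pX k)) /\
    has_pgf pX (tdl_pgf a b c d).
Proof.
  intros [Hf1 Lf1] Hh.
  set (hS := fun m => Hh (S m) (le_n_S _ _ (Nat.le_0_l m))).
  set (q := fun n k => match n with
                       | O => dirac0 k
                       | S m => poisson_mix (h (S m)) (gamma_laplace (S m)) (proj1 (hS m)) (proj2 (hS m)) k
                       end).
  set (pN := poisson_mix f1 _ Hf1 Lf1).
  destruct (tdl_of_compound pN q) as [pX [HX Hpgf]].
  - apply poisson_mix_nonneg.
  - apply has_pgf_poisson_mix.
  - intros [|m] k; [apply dirac0_nonneg | apply poisson_mix_nonneg].
  - intros [|m]; [apply has_pgf_dirac0|]. intros s Hs.
    rewrite <- gamma_laplace_pow by exact Hs. exact (has_pgf_poisson_mix _ _ _ _ s Hs).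
  - exists pN, q, pX. split; [apply poisson_mix_improper|]. split; [reflexivity|].
    split; [intros [|m] k Hn; [lia | apply poisson_mix_improper]|].
    split; [exact HX | exact Hpgf].
Qed.

End TDL.

Theorem mainTheorem11 (a b c d : R) :
  a < 0 -> 0 < b -> 0 < c < 1 -> 0 < d ->
  (exists pS : nat -> R,
     (forall k, infinite_sum
        (fun n => nb_pmf (pi0 a b c d) (1 / d) n * convpow (nb_pmf c (- a)) n k) (pS k))
     /\ has_pgf pS (tdl_pgf a b c d))
  /\
  (exists pX : nat -> R,
     (forall k, infinite_sum
        (fun n => nb_pmf (pi0 a b c d) (1 / d) n * nb_pmf c (- a * INR n) k) (pX k))
     /\ has_pgf pX (tdl_pgf a b c d))
  /\
  (forall (f1 : R -> R) (h : nat -> R -> R),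
     density_with_laplace f1 (fun t => Rpower (1 + b * d * Rpower (1 - c) a * t) (- (1 / d))) ->
     (forall n, (1 <= n)%nat ->
        density_with_laplace (h n) (fun t => Rpower (1 + c * t / (1 - c)) (a * INR n))) ->
     exists (pN : nat -> R) (q : nat -> nat -> R) (pX : nat -> R),
       (forall n, improper_int0 (fun g => f1 g * poisson_pmf g n) (pN n)) /\
       (forall k, q O k = dirac0 k) /\
       (forall n k, (1 <= n)%nat ->
          improper_int0 (fun y => h n y * poisson_pmf y k) (q n k)) /\
       (forall k, infinite_sum (fun n => pN n * q n k) (pX k)) /\
       has_pgf pX (tdl_pgf a b c d)).
Proof.
  intros Ha Hb Hc Hd. split; [|split].
  - apply tdl_random_sum; assumption.
  - apply tdl_nb_mixture; assumption.
  - apply tdl_poisson_gamma; assumption.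
Qed.
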